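(* Let $\lambda$ be a partition with $|\lambda| = k$. Then for all $n \in \mathbb{N}$ (with $\mathbb{N}=\{0,1,2,\dots\}$), \[ \frac{1}{\# \mathcal{OT}(\lambda,k+2n)} \sum_{T \in \mathcal{OT}(\lambda,k+2n)} \mathrm{wt}(T) = \frac{1}{6}\left(4n^2 + 3k^2 + 8 kn + 2n +3k\right).\]
   Context: Young's lattice is the poset of all integer partitions ordered by inclusion of Young diagrams; write $\mu \lessdot \lambda$ if the Young diagram of $\lambda$ is obtained from that of $\mu$ by adding one box. $|\lambda|$ denotes the size (number of boxes) of $\lambda$. A walk in Young's lattice is a sequence of partitions $(\lambda^{0},\lambda^{1},\ldots,\lambda^{l})$ such that for each $1\le i\le l$ either $\lambda^{i-1}\lessdot\lambda^{i}$ or $\lambda^{i}\lessdot\lambda^{i-1}$. An oscillating tableau of shape $\lambda$ and length $l$ is such a walk with $\lambda^{0}=\emptyset$ (the empty partition) and $\lambda^{l}=\lambda$; $\mathcal{OT}(\lambda,l)$ denotes the set of all of them. The weight of $T=(\lambda^{0},\ldots,\lambda^{l})$ is $\mathrm{wt}(T) := \sum_{i=0}^{l}|\lambda^{i}|$. (The set $\mathcal{OT}(\lambda,k+2n)$ is nonempty for all $n\in\mathbb{N}$.) *)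

From mathcomp Require Import all_boot all_order all_algebra.
Set Implicit Arguments. Unset Strict Implicit. Unset Printing Implicit Defensive.

Definition is_partition (p : seq nat) : Prop :=
  sorted geq p /\ all (fun x => 0 < x) p.

Definition psize (p : seq nat) : nat := sumn p.

Definition covers (mu lam : seq nat) : Prop :=
  is_partition mu /\ is_partition lam /\ exists i, lam = incr_nth mu i.

Definition is_osc_tableau (lam : seq nat) (l : nat) (T : seq (seq nat)) : Prop :=
  size T = l.+1 /\ nth [::] T 0 = [::] /\ nth [::] T l = lam /\
  (forall i, i < size T -> is_partition (nth [::] T i)) /\
  (forall i, 0 < i <= l ->
     covers (nth [::] T i.-1) (nth [::] T i) \/ covers (nth [::] T i) (nth [::] T i.-1)).

Definition wt (T : seq (seq nat)) : nat := \sum_(p <- T) psize p.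

(* Young's lattice is a differential poset: a partition has one more upper than lower
   cover, and for [m <> r] the partitions covering both [m] and [r] are in bijection with
   those covered by both (add a box in row [i] and remove one in row [j], in either
   order), so that DU = UD + I.  Hence the numbers f^m of standard Young tableaux satisfy
   [\sum_(v covering m) f^v = (|m| + 1) f^m].  Sorting walks by their endpoint, the number
   of oscillating tableaux of shape [mu] and length [l] is then [f^mu * walk_coef l |mu|]
   and their total weight [f^mu * wt_coef l |mu|], where the coefficients obey recurrences
   in [l] and [|mu|] alone.  Their closed forms are [walk_coef (k + 2n) k =
   C(k + 2n, k) (2n-1)!!] and [6 wt_coef (k + 2n) k = walk_coef (k + 2n) k *
   (4n^2 + 3k^2 + 8kn + 2n + 3k)], and f^lambda cancels in the mean. *)

From mathcomp Require Import all_boot all_order all_algebra zify ring.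
Import GRing.Theory Num.Theory.
Set Implicit Arguments. Unset Strict Implicit. Unset Printing Implicit Defensive.

Definition partitionb (p : seq nat) := sorted geq p && all (fun x => 0 < x) p.

Lemma is_partitionP p : reflect (is_partition p) (partitionb p).
Proof. exact: (iffP andP). Qed.

Lemma partitionb_nthP p :
  reflect ((forall i, nth 0 p i.+1 <= nth 0 p i) /\
           (forall i, i < size p -> 0 < nth 0 p i)) (partitionb p).
Proof.
apply: (iffP andP) => [[/sortedP Hs /all_nthP Hpos]|[Hmon Hpos]]; split.
- move=> i; case: (ltnP i.+1 (size p)) => Hi; first exact: Hs.
  by rewrite nth_default.
- exact: Hpos.
- by apply/(sortedP 0) => i _; apply: Hmon.
- exact/(all_nthP 0).
Qed.

Lemma partition_nth_gt0 p i : partitionb p -> (0 < nth 0 p i) = (i < size p).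
Proof.
case/partitionb_nthP => _ Hpos; case: (ltnP i (size p)) => Hi; first exact: Hpos.
by rewrite nth_default.
Qed.

Lemma partition_nth_le p i j : partitionb p -> i <= j -> nth 0 p j <= nth 0 p i.
Proof.
case/partitionb_nthP => Hmon _ /subnK <-; elim: (j - i) => // d IH.
by rewrite addSn (leq_trans (Hmon _) IH).
Qed.

Lemma partition_ext p q : partitionb p -> partitionb q ->
  (forall i, nth 0 p i = nth 0 q i) -> p = q.
Proof.
move=> Hp Hq Epq; have size_le r r' : partitionb r -> partitionb r' ->
    (forall i, nth 0 r i = nth 0 r' i) -> size r <= size r'.
  move=> Hr Hr' Err'; rewrite leqNgt -(partition_nth_gt0 _ Hr) Err'.
  by rewrite partition_nth_gt0 ?ltnn.
have Esize : size p = size q.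
  by apply/eqP; rewrite eqn_leq !size_le.
by apply: (eq_from_nth (x0 := 0)).
Qed.

Definition addable (m : seq nat) i := (i == 0) || (nth 0 m i < nth 0 m i.-1).
Definition removable (m : seq nat) j := nth 0 m j.+1 < nth 0 m j.

Lemma addable_size m i : addable m i -> i <= size m.
Proof.
case: i => // i; rewrite /addable /=; case: (ltnP i (size m)) => // Hi.
by rewrite !nth_default // leqW.
Qed.

Lemma removable_size m j : removable m j -> j < size m.
Proof.
by case: (ltnP j (size m)) => // Hj; rewrite /removable !nth_default // leqW.
Qed.

Lemma incr_nth_partitionE m i : partitionb m ->
  partitionb (incr_nth m i) = addable m i.
Proof.
move=> Hm; apply/idP/idP => [/partitionb_nthP [Hmon _]|Hi].
  case: i Hmon => // i /(_ i); rewrite /addable !nth_incr_nth eqxx /=.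
  by case: eqP; lia.
have Hsize := addable_size Hi.
case/partitionb_nthP: Hm => Hmon Hpos; apply/partitionb_nthP; split=> [x|x].
  rewrite !nth_incr_nth; have := Hmon x; move: Hi; rewrite /addable.
  by case: (i =P x.+1) => [->|_]; case: (i =P x) => //=; lia.
rewrite size_incr_nth nth_incr_nth; case: (ltnP i (size m)) => Hi' Hx.
  by have := Hpos x Hx; lia.
by case: (ltnP x (size m)) => [/Hpos|]; case: (i =P x) => //; lia.
Qed.

Definition remove_box m j :=
  if nth 0 m j == 1 then take j m else set_nth 0 m j (nth 0 m j).-1.

Section RemoveBox.

Variables (m : seq nat) (j : nat).
Hypotheses (Hm : partitionb m) (Hj : removable m j).

Lemma nth_remove_box x : nth 0 (remove_box m j) x = nth 0 m x - (j == x).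
Proof.
have Hjm := removable_size Hj.
rewrite /remove_box; case: eqP => Hj1; last first.
  by rewrite nth_set_nth /=; case: (x =P j) => [->|]; rewrite ?eqxx; lia.
case: (ltnP x j) => Hx; first by rewrite nth_take //; lia.
rewrite nth_default ?size_take ?Hjm //.
case: (j =P x) => [<-|Hne]; first by rewrite Hj1.
have := partition_nth_le Hm (_ : j.+1 <= x); move: Hj; rewrite /removable; lia.
Qed.

Lemma size_remove_box : size (remove_box m j) <= size m.
Proof.
rewrite /remove_box; case: ifP => _; first by rewrite size_take_min geq_minr.
by rewrite size_set_nth (maxn_idPr (removable_size Hj)).
Qed.

Lemma remove_box_partition : partitionb (remove_box m j).
Proof.
apply/partitionb_nthP; split=> [x|x Hx]; rewrite !nth_remove_box.
  have := partition_nth_le Hm (leqnSn x); move: Hj; rewrite /removable.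
  by case: (j =P x.+1) => [<-|_]; case: (j =P x) => [<-|_] /=; lia.
have Hjm := removable_size Hj; have Hjpos := partition_nth_gt0 j Hm.
have Hxm : x < size m := leq_trans Hx size_remove_box.
have := Hxm; rewrite -(partition_nth_gt0 x Hm); move: Hx Hjpos; rewrite /remove_box.
case: eqP => [E1|N1]; first by rewrite size_take Hjm; case: (j =P x); lia.
by case: (j =P x) => [<-|]; lia.
Qed.

Lemma incr_remove_box : incr_nth (remove_box m j) j = m.
Proof.
have Hjpos := partition_nth_gt0 j Hm; have Hjm := removable_size Hj.
apply: partition_ext => [||x] //; last first.
  by rewrite nth_incr_nth nth_remove_box; case: (j =P x) => [<-|]; lia.
rewrite incr_nth_partitionE ?remove_box_partition // /addable !nth_remove_box.
case: j Hj {Hjpos Hjm} => [//|i]; rewrite /removable /= eqxx => Hi.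
by have := partition_nth_le Hm (leqnSn i); case: (i.+1 =P i); lia.
Qed.

End RemoveBox.

Lemma removable_incr_nth t j : partitionb t -> removable (incr_nth t j) j.
Proof.
move=> Ht; rewrite /removable !nth_incr_nth eqxx.
by have := partition_nth_le Ht (leqnSn j); case: (j =P j.+1); lia.
Qed.

Lemma remove_box_incr t j : partitionb t -> partitionb (incr_nth t j) ->
  remove_box (incr_nth t j) j = t.
Proof.
move=> Ht Htj; have Hj := removable_incr_nth j Ht.
apply: partition_ext => [||x] //; first exact: remove_box_partition.
by rewrite nth_remove_box // nth_incr_nth; lia.
Qed.

Lemma addable_removable_swap m i j : partitionb m -> i != j ->
  addable m i && removable (incr_nth m i) j = removable m j && addable (remove_box m j) i.
Proof.
move=> Hm Hij; rewrite {1}/removable !nth_incr_nth (negbTE Hij).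
case Hj: (removable m j); last first.
  by apply/negbTE; rewrite negb_and orbC; move: Hj; rewrite /removable; lia.
rewrite /addable !nth_remove_box //; case: i Hij => [|i] Hij //=.
move: Hj; rewrite /removable [j == i.+1]eq_sym (negbTE Hij) => Hj.
have [->|Hji] := eqVneq j i; rewrite ?eqxx ?eqSS 1?eq_sym ?(negbTE Hji) /=.
  by apply/andP/idP => [[]|H]; [lia | split; lia].
by rewrite !add0n Hj andbT !subn0.
Qed.

Lemma remove_box_incr_swap m i j : partitionb m -> i != j ->
  addable m i -> removable (incr_nth m i) j ->
  remove_box (incr_nth m i) j = incr_nth (remove_box m j) i.
Proof.
move=> Hm Hij Hi Hj.
have := addable_removable_swap Hm Hij; rewrite Hi Hj => /esym/andP[Hj' Hi'].
have Hmi : partitionb (incr_nth m i) by rewrite incr_nth_partitionE.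
apply: partition_ext => [||x].
- exact: remove_box_partition.
- by rewrite incr_nth_partitionE // remove_box_partition.
- rewrite nth_remove_box // !nth_incr_nth nth_remove_box //.
  by case: (j =P x) => [<-|]; rewrite ?(negbTE Hij) //; lia.
Qed.

Definition ups m := [seq incr_nth m i | i <- iota 0 (size m).+1 & addable m i].
Definition downs m := [seq remove_box m j | j <- iota 0 (size m) & removable m j].
Definition nbrs m := ups m ++ downs m.

Lemma size_ups m : size (ups m) = (size (downs m)).+1.
Proof.
rewrite !size_map !size_filter /= -add1n (iotaDl 1 0) count_map.
by congr (_ + _); apply: eq_count.
Qed.

Lemma sum_ups m N (F : seq nat -> nat) : (size m).+1 <= N ->
  \sum_(v <- ups m) F v = \sum_(0 <= i < N | addable m i) F (incr_nth m i).
Proof.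
move=> HN; rewrite big_map big_filter -{1}(subn0 (size m).+1).
rewrite -/(index_iota 0 _) (big_nat_widen _ _ _ _ _ HN); apply: eq_bigl => i.
by case: (boolP (addable m i)) => //= /addable_size.
Qed.

Lemma sum_downs m N (F : seq nat -> nat) : size m <= N ->
  \sum_(t <- downs m) F t = \sum_(0 <= j < N | removable m j) F (remove_box m j).
Proof.
move=> HN; rewrite big_map big_filter -{1}(subn0 (size m)).
rewrite -/(index_iota 0 _) (big_nat_widen _ _ _ _ _ HN); apply: eq_bigl => j.
by case: (boolP (removable m j)) => //= /removable_size.
Qed.

Lemma sum_nat_D1 (P : pred nat) (F : nat -> nat) N i : i < N -> P i ->
  \sum_(0 <= j < N | P j) F j = F i + \sum_(0 <= j < N | (j != i) && P j) F j.
Proof.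
move=> Hi Pi; rewrite -big_filter (bigD1_seq i) ?filter_uniq ?iota_uniq //=.
  by rewrite big_filter_cond; congr addn; apply: eq_bigl => j; rewrite andbC.
by rewrite mem_filter Pi mem_index_iota.
Qed.

Lemma sum_downs_ups m (F : seq nat -> nat) : partitionb m ->
  \sum_(v <- ups m) \sum_(t <- downs v) F t
  = F m + \sum_(t <- downs m) \sum_(v <- ups t) F v.
Proof.
move=> Hm; set N := (size m).+2.
pose G i j := F (incr_nth (remove_box m j) i).
have up_split i : addable m i -> \sum_(t <- downs (incr_nth m i)) F t
    = F m + \sum_(0 <= j < N | (j != i) && removable (incr_nth m i) j) G i j.
  move=> Hi; have Hmi : partitionb (incr_nth m i) by rewrite incr_nth_partitionE.
  have HiN : i < N by have := addable_size Hi; rewrite /N; lia.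
  rewrite (sum_downs _ (N := N)); last first.
    by rewrite size_incr_nth /N; have := addable_size Hi; case: ltnP; lia.
  rewrite (@sum_nat_D1 (removable (incr_nth m i)) _ N i HiN) ?removable_incr_nth //.
  rewrite remove_box_incr //; congr addn; apply: eq_bigr => j /andP[Hji Hj].
  by rewrite /G remove_box_incr_swap // eq_sym.
have down_split j : removable m j -> \sum_(v <- ups (remove_box m j)) F v
    = F m + \sum_(0 <= i < N | (i != j) && addable (remove_box m j) i) G i j.
  move=> Hj; have HjN : j < N by have := removable_size Hj; rewrite /N; lia.
  rewrite (sum_ups _ (N := N)); last by rewrite ltnS ltnW // ltnS size_remove_box.
  rewrite (@sum_nat_D1 (addable (remove_box m j)) _ N j HjN) ?incr_remove_box //.
  by rewrite -incr_nth_partitionE ?remove_box_partition ?incr_remove_box.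
have const_ups : \sum_(0 <= i < N | addable m i) F m = (size (downs m)).+1 * F m.
  by rewrite -(sum_ups (fun _ => F m)) // big_const_seq count_predT iter_addn_0 size_ups mulnC.
have const_downs : \sum_(0 <= j < N | removable m j) F m = size (downs m) * F m.
  by rewrite -(sum_downs (fun _ => F m)) ?leqW // big_const_seq count_predT iter_addn_0 mulnC.
rewrite (sum_ups _ (N := N)) // (sum_downs _ (N := N)) ?leqW //.
rewrite (eq_bigr _ up_split) (eq_bigr _ down_split) !big_split /= const_ups const_downs.
rewrite mulSn -addnA; congr (_ + (_ + _)).
rewrite (exchange_big_dep_nat (removable m)) /= => [|i j _ _ Hi /andP[Hji Hj]].
  apply: eq_bigr => j Hj; apply: eq_bigl => i; rewrite andbCA eq_sym.
  by case: eqP => //= /eqP Hij; rewrite addable_removable_swap // Hj.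
have Hij : i != j by rewrite eq_sym.
by have := addable_removable_swap Hm Hij; rewrite Hi Hj => /esym/andP[].
Qed.

Lemma sumn_incr_nth v i : sumn (incr_nth v i) = (sumn v).+1.
Proof. by elim: v i => [|a v IH] [|i] //=; [elim: i => //= i -> | rewrite IH addnS]. Qed.

Lemma mem_upsP m v : partitionb m ->
  reflect (partitionb v /\ exists i, v = incr_nth m i) (v \in ups m).
Proof.
move=> Hm; apply: (iffP mapP) => [[i]|[Hv [i Ev]]].
  by rewrite mem_filter -incr_nth_partitionE // => /andP[Hi _] ->; split; last exists i.
move: Hv; rewrite Ev incr_nth_partitionE // => Hi.
by exists i => //; rewrite mem_filter Hi mem_iota add0n ltnS (addable_size Hi).
Qed.

Lemma mem_downsP m t : partitionb m ->
  reflect (partitionb t /\ exists j, m = incr_nth t j) (t \in downs m).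
Proof.
move=> Hm; apply: (iffP mapP) => [[j]|[Ht [j Em]]].
  rewrite mem_filter => /andP[Hj _] ->; split; first exact: remove_box_partition.
  by exists j; rewrite incr_remove_box.
have Hj : removable m j by rewrite Em removable_incr_nth.
exists j; first by rewrite mem_filter Hj mem_iota add0n (removable_size Hj).
by rewrite Em remove_box_incr -?Em.
Qed.

Lemma ups_partition m v : partitionb m -> v \in ups m -> partitionb v.
Proof. by move=> Hm /(mem_upsP _ Hm) []. Qed.

Lemma downs_partition m t : partitionb m -> t \in downs m -> partitionb t.
Proof. by move=> Hm /(mem_downsP _ Hm) []. Qed.

Lemma ups_sumn m v : v \in ups m -> sumn v = (sumn m).+1.
Proof. by case/mapP => i _ ->; rewrite sumn_incr_nth. Qed.

Lemma downs_sumn m t : partitionb m -> t \in downs m -> sumn m = (sumn t).+1.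
Proof. by move=> Hm /(mem_downsP _ Hm) [_ [j ->]]; rewrite sumn_incr_nth. Qed.

Lemma mem_ups_downs a b : partitionb a -> partitionb b -> (b \in ups a) = (a \in downs b).
Proof.
by move=> Ha Hb; apply/(mem_upsP _ Ha)/(mem_downsP _ Hb) => -[_ E]; split.
Qed.

Lemma nbrs_partition m v : partitionb m -> v \in nbrs m -> partitionb v.
Proof. by move=> Hm; rewrite mem_cat => /orP[/ups_partition|/downs_partition]; apply. Qed.

Lemma mem_nbrs_sym a b : partitionb a -> partitionb b -> (b \in nbrs a) = (a \in nbrs b).
Proof. by move=> Ha Hb; rewrite !mem_cat !mem_ups_downs // orbC. Qed.

Lemma mem_nbrsP m v : partitionb m -> v \in nbrs m <-> covers m v \/ covers v m.
Proof.
move=> Hm; rewrite /covers mem_cat; split.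
  by case/orP => [/(mem_upsP _ Hm)|/(mem_downsP _ Hm)] [Hv E];
    [left | right]; split; do ?[exact/is_partitionP | split].
by case=> [[_ [/is_partitionP Hv E]]|[/is_partitionP Hv [_ E]]]; apply/orP;
  [left; apply/(mem_upsP _ Hm) | right; apply/(mem_downsP _ Hm)].
Qed.

Lemma nbrs_uniq m : partitionb m -> uniq (nbrs m).
Proof.
move=> Hm; rewrite cat_uniq; apply/and3P; split.
- by rewrite map_inj_uniq ?filter_uniq ?iota_uniq //; exact: incr_nth_inj.
- apply/hasPn => t /(downs_sumn Hm) Ht; apply/negP => /ups_sumn; lia.
- rewrite map_inj_in_uniq ?filter_uniq ?iota_uniq // => i j.
  rewrite !mem_filter => /andP[Hi _] /andP[Hj _] E.
  by apply: (@incr_nth_inj (remove_box m i)); rewrite {2}E !incr_remove_box.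
Qed.

Lemma partition_sumn_eq0 m : partitionb m -> (sumn m == 0) = (m == [::]).
Proof. by case: m => [|a m] // /andP[_ /= /andP[Ha _]]; rewrite addn_eq0 eqn0Ngt Ha. Qed.

(* [nsyt m] is the number f^m of standard Young tableaux of shape [m], i.e. of
   saturated chains from the empty partition to [m]; [sumn m] is enough fuel. *)
Fixpoint nsyt_fuel n m :=
  if m is [::] then 1 else
  if n is n'.+1 then \sum_(t <- downs m) nsyt_fuel n' t else 0.

Definition nsyt m := nsyt_fuel (sumn m) m.

Lemma nsyt_downs m : partitionb m -> m != [::] ->
  nsyt m = \sum_(t <- downs m) nsyt t.
Proof.
move=> Hm Hne; rewrite /nsyt; case Es: (sumn m) => [|n].
  by move/eqP: Es; rewrite partition_sumn_eq0 // (negbTE Hne).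
case: m Hm Hne Es => // a l Hm _ Es /=; apply: eq_big_seq => t Ht.
by move: (downs_sumn Hm Ht); rewrite /nsyt Es => -[->].
Qed.

Lemma nsyt_gt0 m : partitionb m -> 0 < nsyt m.
Proof.
have [n] := ubnP (sumn m); elim: n m => // n IH m /ltnSE Hmn Hm.
have [->|Hne] := eqVneq m [::]; first by [].
have Hj : removable m (size m).-1.
  rewrite /removable prednK ?lt0n ?size_eq0 // nth_default //.
  by rewrite partition_nth_gt0 // prednK ?lt0n ?size_eq0.
have Ht : remove_box m (size m).-1 \in downs m.
  by rewrite map_f // mem_filter Hj mem_iota (removable_size Hj).
rewrite nsyt_downs // (big_rem _ Ht) /= ltn_addr // IH ?(downs_partition Hm Ht) //.
by move: (downs_sumn Hm Ht) Hmn; lia.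
Qed.

Lemma sum_nsyt_ups m : partitionb m -> \sum_(v <- ups m) nsyt v = (sumn m).+1 * nsyt m.
Proof.
have [n] := ubnP (sumn m); elim: n m => // n IH m /ltnSE Hmn Hm.
rewrite (eq_big_seq (fun v => \sum_(t <- downs v) nsyt t)) => [|v Hv]; last first.
  rewrite nsyt_downs ?(ups_partition Hm Hv) //.
  by apply/eqP => Ev; move: (ups_sumn Hv); rewrite Ev.
rewrite sum_downs_ups // (eq_big_seq (fun t => sumn m * nsyt t)); last first.
  move=> t Ht /=; have Hmt := downs_sumn Hm Ht.
  by rewrite IH ?(downs_partition Hm Ht) -?Hmt //; lia.
rewrite -big_distrr /= mulSn; have [->|Hne] := eqVneq m [::]; first by [].
by rewrite -nsyt_downs.
Qed.

(* [walks l] lists the walks [(lambda^1, ..., lambda^l)] in Young's lattice that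
   start next to [lambda^0 = [::]]; the initial empty partition is left implicit. *)
Fixpoint walks l :=
  if l is l'.+1 then [seq rcons p v | p <- walks l', v <- nbrs (last [::] p)]
  else [:: [::]].

Lemma mem_walks l p :
  (p \in walks l) = (size p == l) && path (fun a b => b \in nbrs a) [::] p.
Proof.
elim: l p => [|l IH] p; first by case: p.
apply/allpairsPdep/idP => [[q [v [Hq Hv ->]]]|].
  by move: Hq; rewrite IH size_rcons rcons_path eqSS => /andP[-> ->].
case/lastP: p => // q v; rewrite size_rcons rcons_path eqSS => /andP[Hs /andP[Hq Hv]].
by exists q, v; rewrite IH Hs.
Qed.

Lemma walks_last_partition l p : p \in walks l -> partitionb (last [::] p).
Proof.
elim: l p => [|l IH] p; first by rewrite mem_seq1 => /eqP ->.
by case/allpairsPdep => q [v [Hq Hv ->]]; rewrite last_rcons (nbrs_partition (IH _ Hq)).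
Qed.

Lemma rcons_allpairs_uniq (T : eqType) (s : seq (seq T)) (t : seq T -> seq T) :
  uniq s -> {in s, forall p, uniq (t p)} -> uniq [seq rcons p v | p <- s, v <- t p].
Proof.
elim: s => //= p s IH /andP[Hp Hs] Ht.
rewrite cat_uniq IH ?andbT => [|//|q Hq]; last by apply: Ht; rewrite inE Hq orbT.
rewrite map_inj_uniq ?Ht ?mem_head //=; last exact: rcons_injr.
apply/hasPn => _ /allpairsPdep [q [w [Hq _ ->]]]; apply/mapP => -[v _] /rcons_inj [Eq _].
by move: Hp; rewrite -Eq Hq.
Qed.

Lemma walks_uniq l : uniq (walks l).
Proof.
elim: l => // l IH; apply: (rcons_allpairs_uniq IH) => p Hp.
exact/nbrs_uniq/(walks_last_partition Hp).
Qed.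

Lemma is_osc_tableau_walks lam l T : is_osc_tableau lam l T <->
  exists p, [/\ p \in walks l, T = [::] :: p & last [::] p = lam].
Proof.
split.
- case=> Hs [H0 [Hl [Hpart Hcov]]].
  case: T Hs H0 Hl Hpart Hcov => // t0 p /= [Hs] -> Hl Hpart Hcov.
  exists p; split => //; last by rewrite (last_nth [::]) Hs.
  rewrite mem_walks Hs eqxx /=; apply/(pathP [::]) => i Hi.
  have Hpi : partitionb (nth [::] ([::] :: p) i).
    by apply/is_partitionP/Hpart; rewrite /= ltnS ltnW.
  by apply/(mem_nbrsP _ Hpi); have := Hcov i.+1; rewrite /= -Hs Hi; apply.
- case=> p [Hp -> Hl]; move: Hp; rewrite mem_walks => /andP[/eqP Hs Hpath].
  have Hpart i : i < size ([::] :: p) -> partitionb (nth [::] ([::] :: p) i).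
    elim: i => [//|i IHi] /= Hi.
    by apply: (nbrs_partition (IHi (ltnW Hi))); apply: (pathP [::] Hpath).
  split; first by rewrite /= Hs.
  split; first by [].
  split; first by rewrite /= -Hl (last_nth [::]) Hs.
  split=> [i Hi|[//|i] /andP[_ Hi]]; first exact/is_partitionP/Hpart.
  have Hpi : partitionb (nth [::] ([::] :: p) i) by apply: Hpart; rewrite /= ltnS Hs ltnW.
  by apply/(mem_nbrsP _ Hpi); apply: (pathP [::] Hpath); rewrite Hs.
Qed.

Definition nwalks l mu := \sum_(p <- walks l | last [::] p == mu) 1.
Definition wt_walks l mu := \sum_(p <- walks l | last [::] p == mu) wt ([::] :: p).

Lemma sum_if_eq_uniq (T : eqType) (s : seq T) x (F : T -> nat) : uniq s ->
  \sum_(y <- s) (if y == x then F y else 0) = if x \in s then F x else 0.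
Proof.
move=> Hs; rewrite -big_mkcond; case: ifP => Hx.
  by rewrite -big_filter filter_pred1_uniq // big_seq1.
by rewrite big_hasC // has_pred1 Hx.
Qed.

Lemma sum_walksS l mu (G : seq (seq nat) -> nat) : partitionb mu ->
  \sum_(p <- walks l.+1 | last [::] p == mu) G p
  = \sum_(v <- nbrs mu) \sum_(p <- walks l | last [::] p == v) G (rcons p mu).
Proof.
move=> Hmu; rewrite big_mkcond big_allpairs_dep /=.
under [RHS]eq_bigr do rewrite big_mkcond.
rewrite [RHS]exchange_big /=; apply: eq_big_seq => p Hp.
have Hlast := walks_last_partition Hp.
under eq_bigr do rewrite last_rcons.
under [RHS]eq_bigr do rewrite eq_sym.
rewrite (sum_if_eq_uniq _ (fun v => G (rcons p v))) ?nbrs_uniq //.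
by rewrite (sum_if_eq_uniq _ (fun _ => G (rcons p mu))) ?nbrs_uniq // mem_nbrs_sym.
Qed.

Lemma nwalksS l mu : partitionb mu ->
  nwalks l.+1 mu = \sum_(v <- ups mu) nwalks l v + \sum_(t <- downs mu) nwalks l t.
Proof. by move=> Hmu; rewrite /nwalks sum_walksS // big_cat. Qed.

Lemma wt_walksS l mu : partitionb mu ->
  wt_walks l.+1 mu = \sum_(v <- ups mu) wt_walks l v + \sum_(t <- downs mu) wt_walks l t
                     + sumn mu * nwalks l.+1 mu.
Proof.
move=> Hmu; rewrite /wt_walks sum_walksS // nwalksS // -!big_cat big_distrr -big_split /=.
apply: eq_bigr => v _; rewrite /nwalks big_distrr -big_split /=; apply: eq_bigr => p _.
by rewrite /wt -cats1 -cat_cons big_cat big_seq1 muln1.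
Qed.

Fixpoint walk_coef l h : nat :=
  if l is l'.+1 then h.+1 * walk_coef l' h.+1 + (if h is h'.+1 then walk_coef l' h' else 0)
  else (h == 0).

Fixpoint wt_coef l h : nat :=
  if l is l'.+1 then
    h.+1 * wt_coef l' h.+1 + (if h is h'.+1 then wt_coef l' h' else 0) + h * walk_coef l h
  else 0.

Lemma sum_ups_nsyt (c : nat -> nat) mu : partitionb mu ->
  \sum_(v <- ups mu) nsyt v * c (sumn v) = (sumn mu).+1 * nsyt mu * c (sumn mu).+1.
Proof.
move=> Hmu; rewrite (eq_big_seq (fun v => nsyt v * c (sumn mu).+1)) => [|v Hv].
  by rewrite -big_distrl sum_nsyt_ups.
by rewrite (ups_sumn Hv).
Qed.

Lemma sum_downs_nsyt (c : nat -> nat) mu : partitionb mu ->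
  \sum_(t <- downs mu) nsyt t * c (sumn t)
  = nsyt mu * (if sumn mu is h.+1 then c h else 0).
Proof.
move=> Hmu; have [->|Hne] := eqVneq mu [::]; first by rewrite big_nil.
case Es: (sumn mu) => [|h].
  by move/eqP: Es; rewrite partition_sumn_eq0 // (negbTE Hne).
rewrite nsyt_downs // big_distrl; apply: eq_big_seq => t Ht /=.
by move: (downs_sumn Hmu Ht); rewrite Es => -[->].
Qed.

Lemma walks_nsyt l mu : partitionb mu ->
  nwalks l mu = nsyt mu * walk_coef l (sumn mu) /\
  wt_walks l mu = nsyt mu * wt_coef l (sumn mu).
Proof.
elim: l mu => [|l IH] mu Hmu.
  rewrite /nwalks /wt_walks /= !big_cons !big_nil /= /wt big_seq1 muln0.
  rewrite partition_sumn_eq0 // [[::] == mu]eq_sym.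
  by case: eqP => [->|]; rewrite ?muln0.
have IHu v : v \in ups mu -> _ := fun Hv => IH v (ups_partition Hmu Hv).
have IHd t : t \in downs mu -> _ := fun Ht => IH t (downs_partition Hmu Ht).
have Hn : nwalks l.+1 mu = nsyt mu * walk_coef l.+1 (sumn mu).
  rewrite nwalksS // (eq_big_seq (fun v => nsyt v * walk_coef l (sumn v))).
    rewrite (eq_big_seq (r := downs mu) (fun t => nsyt t * walk_coef l (sumn t))).
      rewrite (sum_ups_nsyt (walk_coef l)) // (sum_downs_nsyt (walk_coef l)) //.
      by case: (sumn mu) => [|h] /=; ring.
    by move=> t /IHd [].
  by move=> v /IHu [].
split=> //; rewrite wt_walksS // Hn.
rewrite (eq_big_seq (fun v => nsyt v * wt_coef l (sumn v))); last by move=> v /IHu [].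
rewrite (eq_big_seq (r := downs mu) (fun t => nsyt t * wt_coef l (sumn t)));
  last by move=> t /IHd [].
rewrite (sum_ups_nsyt (wt_coef l)) // (sum_downs_nsyt (wt_coef l)) //.
by case: (sumn mu) => [|h] /=; ring.
Qed.

Lemma walk_coef_small l h : l < h -> walk_coef l h = 0.
Proof. by elim: l h => [|l IH] [|h] //= Hlh; rewrite !IH //; lia. Qed.

Lemma wt_coef_small l h : l < h -> wt_coef l h = 0.
Proof.
elim: l h => [|l IH] [|h] //= Hlh.
by rewrite !IH ?walk_coef_small //; lia.
Qed.

Fixpoint odd_fact n := if n is n'.+1 then (2 * n').+1 * odd_fact n' else 1.

Definition alpha n h := 'C(h + 2 * n, h) * odd_fact n.

Definition wt_poly n h := 4 * n ^ 2 + 3 * h ^ 2 + 8 * h * n + 2 * n + 3 * h.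

Lemma alpha_gt0 n h : 0 < alpha n h.
Proof.
rewrite muln_gt0 bin_gt0 leq_addr /=.
by elim: n => //= n IH; rewrite muln_gt0 IH.
Qed.

Lemma alpha0 h : alpha 0 h = 1.
Proof. by rewrite /alpha muln0 addn0 binn. Qed.

Lemma alphaS0 n : alpha n.+1 0 = alpha n 1.
Proof. by rewrite /alpha /= bin0 bin1 mul1n add1n. Qed.

Lemma alpha_up n h : (h + 2 * n + 3) * (h.+2 * alpha n h.+2) = (2 * n).+2 * alpha n.+1 h.+1.
Proof.
rewrite /alpha /=; set M := h.+2 + 2 * n.
have E1 : h.+2 * 'C(M, h.+2) = (2 * n).+1 * 'C(M, h.+1).
  by rewrite mul_bin_left (_ : M - h.+1 = (2 * n).+1) // /M; lia.
have E2 : M.+1 * 'C(M, h.+1) = (2 * n).+2 * 'C(M.+1, h.+1).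
  rewrite -[M in 'C(M, _)]/(M.+1.-1) mul_bin_down.
  by rewrite (_ : M.+1 - h.+1 = (2 * n).+2) // /M; lia.
have -> : h + 2 * n + 3 = M.+1 by rewrite /M; lia.
have -> : h.+1 + 2 * n.+1 = M.+1 by rewrite /M; lia.
rewrite [h.+2 * _]mulnA E1 [LHS](_ : _ = (2 * n).+1 * (M.+1 * 'C(M, h.+1)) * odd_fact n); last ring.
by rewrite E2; ring.
Qed.

Lemma alpha_down n h : (h + 2 * n + 3) * alpha n.+1 h = h.+1 * alpha n.+1 h.+1.
Proof.
rewrite /alpha mulnA (_ : h + 2 * n + 3 = (h + 2 * n.+1).+1); last lia.
by rewrite (mul_bin_diag (h + 2 * n.+1).+1 h) mulnA addSn.
Qed.

Lemma alpha_rec n h : alpha n.+1 h.+1 = h.+2 * alpha n h.+2 + alpha n.+1 h.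
Proof.
have HN : 0 < h + 2 * n + 3 by rewrite addn3.
apply/eqP; rewrite -(eqn_pmul2l HN) mulnDr alpha_up alpha_down.
by rewrite -mulnDl; apply/eqP; congr (_ * _); lia.
Qed.

Lemma walk_coefS l h : walk_coef l.+1 h
  = h.+1 * walk_coef l h.+1 + (if h is h'.+1 then walk_coef l h' else 0).
Proof. by []. Qed.

Lemma wt_coefS l h : wt_coef l.+1 h
  = h.+1 * wt_coef l h.+1 + (if h is h'.+1 then wt_coef l h' else 0) + h * walk_coef l.+1 h.
Proof. by []. Qed.

Lemma wt_poly_rec n h :
  (2 * n).+2 * wt_poly n h.+2 + h.+1 * wt_poly n.+1 h + 6 * h.+1 * (h + 2 * n + 3)
  = (h + 2 * n + 3) * wt_poly n.+1 h.+1.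
Proof. rewrite /wt_poly; ring. Qed.

Lemma walk_coef_alpha n h : walk_coef (h + 2 * n) h = alpha n h.
Proof.
elim: n h => [|n IHn] h.
  rewrite addn0 alpha0; elim: h => // h IHh.
  by rewrite walk_coefS IHh walk_coef_small // muln0.
elim: h => [|h IHh].
  rewrite (_ : 0 + 2 * n.+1 = (1 + 2 * n).+1); last lia.
  by rewrite walk_coefS IHn alphaS0 mul1n addn0.
rewrite (_ : h.+1 + 2 * n.+1 = (h.+2 + 2 * n).+1) 1?walk_coefS; last lia.
by rewrite IHn (_ : h.+2 + 2 * n = h + 2 * n.+1) 1?IHh -1?alpha_rec //; lia.
Qed.

Lemma wt_coef_alpha n h : 6 * wt_coef (h + 2 * n) h = alpha n h * wt_poly n h.
Proof.
elim: n h => [|n IHn] h.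
  rewrite addn0 alpha0 mul1n; elim: h => // h IHh.
  rewrite wt_coefS (wt_coef_small (ltnW (ltnSn _))) muln0 add0n.
  have := walk_coef_alpha 0 h.+1; rewrite addn0 alpha0 => ->.
  by move: IHh; rewrite /wt_poly; nia.
elim: h => [|h IHh].
  rewrite (_ : 0 + 2 * n.+1 = (1 + 2 * n).+1) 1?wt_coefS ?mul0n ?mul1n ?addn0 1?IHn; last lia.
  by rewrite alphaS0 /wt_poly; nia.
have HN : 0 < h + 2 * n + 3 by rewrite addn3.
rewrite (_ : h.+1 + 2 * n.+1 = (h.+2 + 2 * n).+1) 1?wt_coefS; last lia.
rewrite -(_ : h.+1 + 2 * n.+1 = (h.+2 + 2 * n).+1) 1?walk_coef_alpha; last lia.
rewrite [LHS](_ : _ = h.+2 * (6 * wt_coef (h.+2 + 2 * n) h.+2)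
                      + 6 * wt_coef (h.+2 + 2 * n) h + 6 * h.+1 * alpha n.+1 h.+1); last ring.
rewrite IHn (_ : h.+2 + 2 * n = h + 2 * n.+1) 1?IHh; last lia.
apply/eqP; rewrite -(eqn_pmul2l HN); apply/eqP.
rewrite [LHS](_ : _ = (h + 2 * n + 3) * (h.+2 * alpha n h.+2) * wt_poly n h.+2
                      + (h + 2 * n + 3) * alpha n.+1 h * wt_poly n.+1 h
                      + 6 * h.+1 * (h + 2 * n + 3) * alpha n.+1 h.+1); last ring.
rewrite alpha_up alpha_down [RHS]mulnCA -wt_poly_rec; ring.
Qed.

Lemma osc_tableaux_perm lam l (s : seq (seq (seq nat))) :
  uniq s -> (forall T, T \in s <-> is_osc_tableau lam l T) ->
  perm_eq s [seq [::] :: p | p <- walks l & last [::] p == lam].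
Proof.
move=> Hu Hs; apply: uniq_perm => //.
  by rewrite map_inj_uniq ?filter_uniq ?walks_uniq // => p q [].
move=> T; apply/idP/idP.
  move/Hs/is_osc_tableau_walks => [p [Hp -> Hl]].
  by rewrite map_f // mem_filter Hl eqxx.
case/mapP => p; rewrite mem_filter => /andP[/eqP Hl Hp] ->.
by apply/Hs/is_osc_tableau_walks; exists p.
Qed.

Local Open Scope ring_scope.

Theorem theorem2 (lam : seq nat) (k n : nat) (s : seq (seq (seq nat))) :
  is_partition lam -> psize lam = k ->
  uniq s -> (forall T, T \in s <-> is_osc_tableau lam (k + 2 * n) T) ->
  (\sum_(T <- s) wt T)%:R / (size s)%:R
    = (4 * n ^ 2 + 3 * k ^ 2 + 8 * k * n + 2 * n + 3 * k)%:R / 6 :> rat.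
Proof.
move=> /is_partitionP Hlam Hk Hu Hs; have Hp := osc_tableaux_perm Hu Hs.
have [Hn Hw] := walks_nsyt (k + 2 * n) Hlam; rewrite [sumn lam]Hk in Hn Hw.
have Hsize : size s = (nsyt lam * alpha n k)%N.
  by rewrite (perm_size Hp) size_map size_filter -sum1_count -walk_coef_alpha -Hn.
have Hwt : (6 * \sum_(T <- s) wt T = size s * wt_poly n k)%N.
  by rewrite (perm_big _ Hp) big_map big_filter -/(wt_walks _ _) Hw Hsize mulnCA
    wt_coef_alpha mulnA.
have Hs0 : (0 < size s)%N by rewrite Hsize muln_gt0 nsyt_gt0 ?alpha_gt0.
apply/eqP; rewrite eqr_div ?pnatr_eq0 -?lt0n // -!natrM; apply/eqP; congr _%:R.
by rewrite mulnC Hwt mulnC.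
Qed.
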